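(* Let $d\ge 1$ and $k\ge 2$ be integers. The Hamming graph $H(d,k)$ admits a closed neighborhood balanced $k$-coloring if and only if $d\equiv 1 \pmod{k}$.
   Context: The Hamming graph $H(d,k)$ has vertex set $S^d$ where $S=\{1,2,\dots,k\}$, two $d$-tuples being adjacent iff they differ in exactly one coordinate. For a vertex $v$ of a graph $G$, $N[v]=\{v\}\cup\{u : uv\in E(G)\}$. A closed neighborhood balanced $k$-coloring of $G$ is a map $c: V(G)\to\{1,\dots,k\}$ such that for every vertex $v$ the numbers $|\{u\in N[v] : c(u)=i\}|$, $i=1,\dots,k$, are all equal. *)

From mathcomp Require Import all_boot.
Set Implicit Arguments. Unset Strict Implicit. Unset Printing Implicit Defensive.

Definition hvert (d k : nat) := {ffun 'I_d -> 'I_k}.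

Definition hadj (d k : nat) (x y : hvert d k) : bool :=
  #|[set i : 'I_d | x i != y i]| == 1.

Definition hclosed_nbhd (d k : nat) (v : hvert d k) : {set hvert d k} :=
  [set u | (u == v) || hadj v u].

Definition cnb_coloring (d k : nat) (c : hvert d k -> 'I_k) : Prop :=
  forall (v : hvert d k) (i j : 'I_k),
    #|[set u in hclosed_nbhd v | c u == i]| = #|[set u in hclosed_nbhd v | c u == j]|.

From mathcomp Require Import all_boot all_algebra zify.
Set Implicit Arguments. Unset Strict Implicit. Unset Printing Implicit Defensive.

Import GRing.Theory.

(* Counting N[v] coordinate by coordinate gives |N[v]| = 1 + d(k-1), so a
   balanced k-colouring forces k | 1 + d(k-1), i.e. d = 1 (mod k).
   Conversely, if d = mk + 1, fix a set S of t = 1 + m(k-1) coordinates and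
   colour x by the sum of its S-coordinates in Z/kZ.  A neighbour of v obtained
   by changing a coordinate in S takes every colour other than c(v) exactly
   once; changing a coordinate outside S keeps the colour c(v).  Hence every
   colour other than c(v) occurs |S| = t times in N[v], and c(v) occurs
   1 + (d - t)(k-1) = 1 + m(k-1) = t times. *)

Section HammingNeighbourhood.
Variables d k : nat.
Implicit Types (v u : hvert d k) (i : 'I_d) (a : 'I_k).

Definition hupd v i a : hvert d k := [ffun j => if j == i then a else v j].

Lemma hupd_id v i a : hupd v i a i = a.
Proof. by rewrite ffunE eqxx. Qed.

Lemma hupd_other v i a j : j != i -> hupd v i a j = v j.
Proof. by rewrite ffunE => /negbTE ->. Qed.

Lemma hadj_hupd v i a : a != v i -> hadj v (hupd v i a).
Proof.
move=> av; apply/cards1P; exists i; apply/setP => j; rewrite !inE.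
have [->|ji] := eqVneq j i; first by rewrite hupd_id eq_sym av.
by rewrite hupd_other // eqxx.
Qed.

Lemma hadj_exists_hupd v u : hadj v u -> exists2 i, u i != v i & u = hupd v i (u i).
Proof.
case/cards1P => i diff_i; have diffP j : (v j != u j) = (j == i).
  by rewrite -in_set1 -diff_i inE.
exists i; first by rewrite eq_sym diffP.
apply/ffunP => j; have [->|ji] := eqVneq j i; first by rewrite hupd_id.
by rewrite hupd_other //; apply/esym/eqP; rewrite -[_ == _]negbK diffP.
Qed.

Lemma hadj_irrefl v : ~~ hadj v v.
Proof.
rewrite /hadj (_ : [set _ | _] = set0) ?cards0 //.
by apply/setP => i; rewrite !inE eqxx.
Qed.

Lemma hupd_inj v :
  {in [pred p : 'I_d * 'I_k | p.2 != v p.1] &, injective (fun p => hupd v p.1 p.2)}.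
Proof.
move=> [i a] [i' a']; rewrite !inE /= => av _ e.
have ii' : i = i'.
  apply/eqP; apply: contraTT av => ii'.
  by rewrite -[a](hupd_id v i) e hupd_other ?eqxx.
by subst i'; rewrite -[a](hupd_id v i) e hupd_id.
Qed.

Lemma card_hclosed_nbhd_pred (P : pred (hvert d k)) v :
  #|[set u in hclosed_nbhd v | P u]| =
  P v + \sum_(i < d) #|[set a | (a != v i) && P (hupd v i a)]|.
Proof.
pose D := [set p : 'I_d * 'I_k | (p.2 != v p.1) && P (hupd v p.1 p.2)].
have -> : [set u in hclosed_nbhd v | P u] =
          [set u | (u == v) && P u] :|: [set hupd v p.1 p.2 | p in D].
  apply/setP => u; rewrite !inE; apply/idP/idP.
    case/andP => /orP[/eqP-> -> | /hadj_exists_hupd[i uv ->] Pu]; first by rewrite eqxx.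
    by apply/orP; right; apply/imsetP; exists (i, u i); rewrite // inE uv.
  case/orP => [/andP[-> ->] // | /imsetP[[i a]]].
  by rewrite inE /= => /andP[av Pa] ->; rewrite Pa hadj_hupd ?orbT.
rewrite cardsU (_ : _ :&: _ = set0) ?cards0 ?subn0; last first.
  apply/setP => u; rewrite !inE; apply/andP => -[/andP[/eqP-> _]].
  case/imsetP => [[i a]]; rewrite inE /= => /andP[av _] vE.
  by move: (hadj_irrefl v); rewrite {2}vE hadj_hupd.
rewrite card_in_imset; last by move=> p q; rewrite !inE => /andP[+ _] /andP[+ _]; apply: hupd_inj.
congr (_ + _).
  have -> : [set u | (u == v) && P u] = if P v then [set v] else set0.
    apply/setP => u; rewrite inE.
    by have [->|uv] := eqVneq u v; case: ifP => Pv; rewrite ?inE ?eqxx ?(negbTE uv) ?Pv.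
  by case: (P v); rewrite ?cards1 ?cards0.
rewrite (eq_bigr (fun i => \sum_(a | (a != v i) && P (hupd v i a)) 1)); last first.
  by move=> i _; rewrite -sum1_card; apply: eq_bigl => a; rewrite inE.
by rewrite pair_big_dep -sum1_card; apply: eq_bigl => p; rewrite inE.
Qed.

Lemma card_hclosed_nbhd v : #|hclosed_nbhd v| = 1 + d * k.-1.
Proof.
have -> : hclosed_nbhd v = [set u in hclosed_nbhd v | predT u].
  by apply/setP => u; rewrite !inE andbT.
rewrite card_hclosed_nbhd_pred; congr (_ + _).
rewrite -[d in RHS]card_ord -sum_nat_const; apply: eq_bigr => i _.
by rewrite -[k in RHS]card_ord -(cardsC1 (v i)); apply: eq_card => a; rewrite !inE andbT.
Qed.

End HammingNeighbourhood.

Lemma card_eq_fibres k (T : finType) (A : {set T}) (c : T -> 'I_k) n :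
  (forall j, #|[set x in A | c x == j]| = n) -> #|A| = k * n.
Proof.
move=> fibre; rewrite -sum1_card (partition_big c predT) //=.
rewrite (eq_bigr (fun=> n)) ?sum_nat_const ?card_ord //.
by move=> j _; rewrite -(fibre j) -sum1_card; apply: eq_bigl => x; rewrite !inE.
Qed.

Lemma cnb_coloring_modn d k (c : hvert d k -> 'I_k) :
  0 < k -> cnb_coloring c -> d = 1 %[mod k].
Proof.
move=> k_gt0 balanced; pose j0 := Ordinal k_gt0; pose v : hvert d k := [ffun=> j0].
have := card_eq_fibres (fun j => balanced v j j0); rewrite card_hclosed_nbhd.
set n := #|_| => nbhdE.
have /(congr1 (modn^~ k)) : k * n + d = d * k + 1 by rewrite -nbhdE; nia.
by rewrite mulnC !modnMDl.
Qed.

Lemma sum_nat_if_in (T : finType) (S : {pred T}) m n :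
  \sum_(i : T) (if i \in S then m else n) = #|S| * m + (#|T| - #|S|) * n.
Proof.
rewrite (bigID (mem S)) /= -(cardC S) addKn -!sum_nat_const.
by congr (_ + _); apply: eq_bigr => i; [move-> | move/negbTE->].
Qed.

Section SumColouring.
Variables (d k : nat) (S : {set 'I_d}).
Implicit Types (v : hvert d k.+1) (i : 'I_d) (a j : 'I_k.+1).

Definition sum_colour v : 'I_k.+1 := (\sum_(i in S) v i)%R.

Lemma sum_colour_hupd v i a :
  sum_colour (hupd v i a) = if i \in S then (sum_colour v - v i + a)%R else sum_colour v.
Proof.
rewrite /sum_colour; case: ifP => Si.
  rewrite (bigD1 i) //= [in RHS](bigD1 i) //= hupd_id.
  rewrite (eq_bigr v) => [|j /andP[_ ji]]; last by rewrite hupd_other.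
  by rewrite [(v i + _)%R]addrC addrK addrC.
by apply: eq_bigr => j Sj; rewrite hupd_other //; apply: contraTneq Sj => ->; rewrite Si.
Qed.

Lemma card_sum_colour_hupd v i j :
  #|[set a | (a != v i) && (sum_colour (hupd v i a) == j)]| =
  if i \in S then (j != sum_colour v : nat) else (sum_colour v == j) * k.
Proof.
under eq_finset => a do rewrite sum_colour_hupd.
case: ifP => Si; last first.
  have [_|_] := eqVneq (sum_colour v) j; under eq_finset => a do rewrite ?andbT ?andbF.
    by rewrite (cardsE (predC1 (v i))) cardC1 card_ord mul1n.
  by rewrite cards0.
set c := (sum_colour v - v i)%R.
have colE a : (c + a == j)%R = (a == j - c)%R.
  by apply/eqP/eqP => [<- | ->]; rewrite (addrC c) ?addrK ?subrK.
under eq_finset => a do rewrite colE.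
have [->|jv] := eqVneq j (sum_colour v).
  rewrite (_ : sum_colour v - c = v i)%R.
    under eq_finset => a do rewrite andNb.
    by rewrite cards0.
  by rewrite /c opprB addrC subrK.
have jcv : (j - c != v i)%R.
  by apply: contra_neq jv => jcE; rewrite -(subrK c j) jcE /c addrC subrK.
rewrite (_ : [set a | _] = [set j - c]%R) ?cards1 //.
apply/setP => a; rewrite !inE.
by have [->|_] := eqVneq a (j - c)%R; rewrite ?jcv ?andbF.
Qed.

Lemma card_sum_colour_class v j :
  #|[set u in hclosed_nbhd v | sum_colour u == j]| =
  if sum_colour v == j then 1 + (d - #|S|) * k else #|S|.
Proof.
rewrite card_hclosed_nbhd_pred.
under eq_bigr => i _ do rewrite card_sum_colour_hupd.
rewrite sum_nat_if_in card_ord eq_sym.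
by case: eqVneq; rewrite /= ?muln0 ?add0n ?muln1 ?mul1n ?addn0.
Qed.

End SumColouring.

Lemma hamming_cnb_coloring d k m :
  d = m * k.+1 + 1 -> exists c : hvert d k.+1 -> 'I_k.+1, cnb_coloring c.
Proof.
move=> dE; pose t := 1 + m * k; have le_t_d : t <= d by rewrite dE /t mulnS; lia.
pose S := [set widen_ord le_t_d i | i : 'I_t].
have cardS : #|S| = t.
  by rewrite card_imset ?card_ord // => i i' /(congr1 val) /= /val_inj.
have dS : d - #|S| = m by rewrite cardS dE /t mulnS; lia.
by exists (sum_colour S) => v i j; rewrite !card_sum_colour_class dS cardS !if_same.
Qed.

Theorem theorem2p5 (d k : nat) (hd : 1 <= d) (hk : 2 <= k) :
  (exists c : hvert d k -> 'I_k, cnb_coloring c) <-> d = 1 %[mod k].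
Proof.
split=> [[c] | d_mod]; first exact: cnb_coloring_modn (ltnW hk).
case: k hk d_mod => [|[|k]] // _ d_mod.
apply: (@hamming_cnb_coloring d k.+1 (d %/ k.+2)).
by rewrite {1}(divn_eq d k.+2) d_mod.
Qed.
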